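(* Let $T_1=\begin{pmatrix}1&1\\0&1\end{pmatrix}$ and $T_2=\begin{pmatrix}0&1\\0&1\end{pmatrix}$. Then $h(T)=0$.
   Context: Define $\gamma^{[s_j]}_{i,n}$ ($i,j\in\{1,2\}$, $n\ge0$) by $\gamma^{[s_j]}_{i,0}=1$ and for $n\ge1$ $$\gamma^{[s_1]}_{i,n}=\sum_{j,k=1}^2T_1(i,j)T_2(i,k)\,\gamma^{[s_1]}_{j,n-1}\gamma^{[s_2]}_{k,n-1},\qquad \gamma^{[s_2]}_{i,n}=\sum_{j=1}^2T_1(i,j)\,\gamma^{[s_1]}_{j,n-1}.$$ Let $l_0=1$, $l_1=2$, $l_{k+1}=l_k+l_{k-1}$, $|E_n|=\sum_{k=0}^nl_k$ (the number of elements of word length $\le n$ in the monoid $G=\langle s_1,s_2\mid s_2s_2=s_2\rangle$), and $h(T)=\limsup_{n\to\infty}\frac{\ln(\gamma^{[s_1]}_{1,n}+\gamma^{[s_1]}_{2,n})}{|E_n|}$, the paper's entropy of the $G$-vertex shift with adjacency matrices $T=(T_1,T_2)$ over $\{1,2\}$. *)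

From Stdlib Require Import Reals.
From Coquelicot Require Import Coquelicot.
Open Scope R_scope.

(* Indices i in {1,2} are encoded as the type bool: true = 1, false = 2. *)
Definition idx := bool.
Definition sum2 (f : idx -> nat) : nat := (f true + f false)%nat.

(* gamma T1 T2 n = (gamma^[s_1]_{.,n}, gamma^[s_2]_{.,n}) *)
Fixpoint gamma (T1 T2 : idx -> idx -> nat) (n : nat) : (idx -> nat) * (idx -> nat) :=
  match n with
  | O => (fun _ => 1%nat, fun _ => 1%nat)
  | S m =>
      let (g1, g2) := gamma T1 T2 m in
      (fun i => sum2 (fun j => sum2 (fun k => T1 i j * T2 i k * g1 j * g2 k)%nat),
       fun i => sum2 (fun j => T1 i j * g1 j)%nat)
  end.

Definition gamma1 T1 T2 (i : idx) (n : nat) : nat := fst (gamma T1 T2 n) i.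
Definition gamma2 T1 T2 (i : idx) (n : nat) : nat := snd (gamma T1 T2 n) i.

(* l_0 = 1, l_1 = 2, l_{k+1} = l_k + l_{k-1} *)
Fixpoint lpair (k : nat) : nat * nat :=
  match k with
  | O => (1%nat, 2%nat)
  | S m => let (a, b) := lpair m in (b, (a + b)%nat)
  end.
Definition l (k : nat) : nat := fst (lpair k).

Fixpoint card_E (n : nat) : nat :=
  match n with
  | O => l 0
  | S m => (card_E m + l (S m))%nat
  end.

Definition entropy_seq T1 T2 (n : nat) : R :=
  ln (INR (gamma1 T1 T2 true n + gamma1 T1 T2 false n)) / INR (card_E n).

Definition h T1 T2 : Rbar := LimSup_seq (entropy_seq T1 T2).

(* T_1 = [[1,1],[0,1]], T_2 = [[0,1],[0,1]] (row i, column j). *)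
Definition T1ex (i j : idx) : nat :=
  match i, j with true, true => 1 | true, false => 1 | false, true => 0 | false, false => 1 end%nat.
Definition T2ex (i j : idx) : nat :=
  match i, j with true, true => 0 | true, false => 1 | false, true => 0 | false, false => 1 end%nat.

From Stdlib Require Import Reals.
From Coquelicot Require Import Coquelicot.
From Stdlib Require Import Lia Lra.

(* For these matrices the numerator is ln(n + 2), since gamma^[s_1]_{1,n} = n + 1
   and gamma^[s_1]_{2,n} = 1, whereas l_k >= k + 1 makes |E_n| >= (n+1)(n+2)/2.
   With ln x <= x - 1 the ratio is squeezed between 0 and 2/(n+2), so the
   sequence tends to 0 and so does its limsup. *)

Lemma ln_le_sub_1 (x : R) : 0 < x -> ln x <= x - 1.
Proof.
  intro Hx.
  rewrite <- (ln_exp (x - 1)).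
  apply ln_le; [exact Hx|].
  pose proof (exp_ineq1_le (x - 1)); lra.
Qed.

Lemma ln_div_le_2_div (m c : R) :
  1 < m -> (m - 1) * m <= 2 * c -> 0 <= ln m / c <= 2 / m.
Proof.
  intros Hm Hmc.
  assert (Hc : 0 < c) by nra.
  assert (Hln0 : 0 <= ln m) by (rewrite <- ln_1; apply ln_le; lra).
  pose proof (ln_le_sub_1 m ltac:(lra)) as Hln.
  split.
  - apply Rdiv_le_0_compat; lra.
  - apply Rmult_le_reg_r with (c * m); [nra|].
    unfold Rdiv; field_simplify; nra.
Qed.

Lemma gamma_T1ex_T2ex (n : nat) :
  gamma1 T1ex T2ex true n = S n /\ gamma1 T1ex T2ex false n = 1%nat
  /\ gamma2 T1ex T2ex false n = 1%nat.
Proof.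
  unfold gamma1, gamma2.
  induction n as [|n IH]; [simpl; auto|].
  simpl; destruct (gamma T1ex T2ex n) as [g1 g2]; simpl in IH.
  destruct IH as [H1 [H2 H3]].
  unfold sum2; simpl; rewrite H1, H2, H3; lia.
Qed.

Lemma gamma1_sum_T1ex_T2ex (n : nat) :
  (gamma1 T1ex T2ex true n + gamma1 T1ex T2ex false n)%nat = S (S n).
Proof. destruct (gamma_T1ex_T2ex n) as [-> [-> _]]; lia. Qed.

Lemma lpair_ge (k : nat) : (S k <= fst (lpair k))%nat /\ (S (S k) <= snd (lpair k))%nat.
Proof.
  induction k as [|k IH]; simpl; [lia|].
  destruct (lpair k) as [a b]; simpl in *; lia.
Qed.

Lemma l_ge_succ (k : nat) : (S k <= l k)%nat.
Proof. exact (proj1 (lpair_ge k)). Qed.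

Lemma card_E_ge (n : nat) : (S n * S (S n) <= 2 * card_E n)%nat.
Proof.
  induction n as [|n IH]; simpl card_E.
  - pose proof (l_ge_succ 0); lia.
  - pose proof (l_ge_succ (S n)); nia.
Qed.

Lemma entropy_seq_T1ex_T2ex_bounds (n : nat) :
  0 <= entropy_seq T1ex T2ex n <= 2 / INR (S (S n)).
Proof.
  unfold entropy_seq; rewrite gamma1_sum_T1ex_T2ex.
  apply ln_div_le_2_div.
  - rewrite S_INR; pose proof (lt_0_INR (S n) (Nat.lt_0_succ n)); lra.
  - replace (INR (S (S n)) - 1) with (INR (S n)) by (rewrite (S_INR (S n)); ring).
    rewrite <- mult_INR; change 2 with (INR 2); rewrite <- mult_INR.
    apply le_INR, card_E_ge.
Qed.

Lemma is_lim_seq_2_div_INR_SS : is_lim_seq (fun n => 2 / INR (S (S n))) 0.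
Proof.
  assert (Hinf : is_lim_seq (fun n => INR (S (S n))) p_infty).
  { apply (is_lim_seq_incr_1 (fun n => INR (S n))), (is_lim_seq_incr_1 INR).
    apply is_lim_seq_INR. }
  apply is_lim_seq_inv in Hinf; [|discriminate].
  apply (is_lim_seq_scal_l _ 2) in Hinf.
  replace (Finite 0) with (Rbar_mult 2 (Rbar_inv p_infty)) by (simpl; f_equal; ring).
  exact Hinf.
Qed.

Theorem proposition3 : h T1ex T2ex = Finite 0%R.
Proof.
  unfold h.
  apply is_LimSup_seq_unique, is_lim_LimSup_seq.
  apply is_lim_seq_le_le with (fun _ => 0) (fun n => 2 / INR (S (S n))).
  - exact entropy_seq_T1ex_T2ex_bounds.
  - apply is_lim_seq_const.
  - exact is_lim_seq_2_div_INR_SS.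
Qed.
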